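(* Let $G$ be a finite simple graph with a homogeneous set $H$, let $k = \chi(G[H])$, and let $K_k$ be a clique on $k$ vertices disjoint from $G$. Let $g(G,H,K_k)$ be the graph obtained from $G$ by deleting $H$, adding $K_k$, and joining every vertex of $V(G)\setminus H$ that has a neighbor in $H$ to all vertices of $K_k$. Then (i) $\chi(G) = \chi(g(G,H,K_k))$; and (ii) if $G$ contains no induced banner and no induced odd hole, then neither does $g(G,H,K_k)$.
   Context: $\chi$ denotes chromatic number. A set $H \subseteq V(G)$ is homogeneous if $2 \leq |H| < |V(G)|$ and every vertex of $V(G)\setminus H$ is adjacent either to all of $H$ or to none of $H$. A hole is a chordless cycle with at least four vertices; it is odd if it has an odd number of vertices. A banner is a hole on four vertices plus one vertex adjacent to exactly one vertex of that hole. *)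

(* Finite simple graphs are encoded as a relation e : rel T
   on a finType T; simplicity (symmetric, irreflexive) is a hypothesis of the
   theorem. *)
From mathcomp Require Import all_boot all_order.
Set Implicit Arguments. Unset Strict Implicit. Unset Printing Implicit Defensive.

Definition colorable (T : finType) (e : rel T) (n : nat) : bool :=
  [exists f : {ffun T -> 'I_n}, [forall x, forall y, e x y ==> (f x != f y)]].

Lemma colorable_card (T : finType) (e : rel T) (He : irreflexive e) :
  exists n, colorable e n.
Proof.
exists #|T|; apply/existsP; exists [ffun x => enum_rank x].
apply/forallP => x; apply/forallP => y; apply/implyP => exy.
rewrite !ffunE; apply: contraL exy => /eqP/enum_rank_inj ->; by rewrite He.
Qed.

(* chromatic number (for irreflexive e; 0 on the degenerate loop case) *)
Definition chi (T : finType) (e : rel T) : nat :=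
  match @idP [forall x, ~~ e x x] with
  | ReflectT h => ex_minn (colorable_card (fun x => negbTE (forallP h x)))
  | ReflectF _ => 0
  end.

Definition induced_on (T : finType) (e : rel T) (A : {set T}) : rel {x : T | x \in A} :=
  fun x y => e (val x) (val y).

Definition homogeneous (T : finType) (e : rel T) (H : {set T}) : Prop :=
  2 <= #|H| /\ #|H| < #|T| /\
  forall v, v \notin H ->
    (forall h, h \in H -> e v h) \/ (forall h, h \in H -> ~~ e v h).

Definition has_induced (T : finType) (e : rel T) (n : nat) (F : rel 'I_n) : Prop :=
  exists f : 'I_n -> T, injective f /\
    forall i j, i != j -> e (f i) (f j) = F i j.

Definition cycle_rel (n : nat) : rel 'I_n :=
  fun i j => (val j == (val i).+1 %% n) || (val i == (val j).+1 %% n).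

Definition has_odd_hole (T : finType) (e : rel T) : Prop :=
  exists n, 4 <= n /\ odd n /\ has_induced e (@cycle_rel n).

(* banner: 4-hole 0-1-2-3-0 plus vertex 4 adjacent only to 0 *)
Definition banner_rel : rel 'I_5 :=
  fun i j => let a := val i in let b := val j in
    ((a < 4) && (b < 4) && ((b == (a.+1 %% 4)) || (a == (b.+1 %% 4))))
    || ((a == 4) && (b == 0)) || ((a == 0) && (b == 4)).

Definition has_banner (T : finType) (e : rel T) : Prop :=
  has_induced e banner_rel.

Definition gvert (T : finType) (H : {set T}) (k : nat) : finType :=
  ({x : T | x \notin H} + 'I_k)%type.

Definition gGHK (T : finType) (e : rel T) (H : {set T}) (k : nat) : rel (gvert H k) :=
  fun u v =>
    match u, v with
    | inl x, inl y => e (val x) (val y)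
    | inl x, inr _ => [exists h in H, e (val x) h]
    | inr _, inl y => [exists h in H, e (val y) h]
    | inr i, inr j => i != j
    end.

Arguments induced_on {T} e A.
Arguments gGHK {T} e H k.

(** Every colouring of [G] colours the clique with the at least [k] colours
    it already uses on [H]; conversely [H] can be coloured with the colours of
    the clique, since every outside vertex sees all of [H] or none of it.
    For (ii), the vertices of the new clique are pairwise adjacent twins; an
    induced odd hole or banner is triangle-free and has no edge as a connected
    component, so it contains at most one of them, and replacing that vertex
    by any vertex of [H] gives an induced copy in [G]. *)
From mathcomp Require Import all_boot all_order zify.
Set Implicit Arguments. Unset Strict Implicit. Unset Printing Implicit Defensive.

Lemma chi_colorable (T : finType) (e : rel T) :
  irreflexive e -> colorable e (chi e).
Proof.
move=> e_irr; rewrite /chi; case: {-}_ / idP => [h|[]]; first by case: ex_minnP.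
by apply/forallP => x; rewrite e_irr.
Qed.

Lemma chi_min (T : finType) (e : rel T) n :
  irreflexive e -> colorable e n -> chi e <= n.
Proof.
move=> e_irr; rewrite /chi; case: {-}_ / idP => [h|[]]; first by case: ex_minnP => m _; apply.
by apply/forallP => x; rewrite e_irr.
Qed.

Lemma colorableP (T : finType) (e : rel T) n :
  reflect (exists f : T -> 'I_n, forall x y, e x y -> f x != f y) (colorable e n).
Proof.
apply: (iffP existsP) => [[f /forallP Hf]|[f Hf]].
  by exists f => x y exy; move/forallP: (Hf x) => /(_ y); rewrite exy.
exists [ffun x => f x]; apply/forallP => x; apply/forallP => y; apply/implyP => exy.
by rewrite !ffunE Hf.
Qed.

Lemma induced_on_irr (T : finType) (e : rel T) (A : {set T}) :
  irreflexive e -> irreflexive (induced_on e A).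
Proof. by move=> e_irr x; rewrite /induced_on e_irr. Qed.

Lemma gGHK_irr (T : finType) (e : rel T) (H : {set T}) k :
  irreflexive e -> irreflexive (gGHK e H k).
Proof. by move=> e_irr [x|i]; rewrite /gGHK ?e_irr ?eqxx. Qed.

Definition triangle_free n (F : rel 'I_n) :=
  forall i j l, i != j -> j != l -> i != l -> F i j -> F j l -> F i l -> False.

Definition edges_in_P3 n (F : rel 'I_n) :=
  forall i j, i != j -> F i j -> exists l, [&& l != i, l != j & F i l || F j l].

Lemma succ_modn n i : i < n -> i.+1 %% n = (if i.+1 == n then 0 else i.+1).
Proof.
move=> lt_in; case: eqP => [->|ne]; first by rewrite modnn.
by rewrite modn_small // ltn_neqAle lt_in andbT; apply/eqP.
Qed.

Lemma cycle_rel_triangle_free n : 3 < n -> triangle_free (@cycle_rel n).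
Proof.
move=> n4 [i lt_in] [j lt_jn] [l lt_ln]; rewrite /cycle_rel -!val_eqE /= !succ_modn //.
by move=> ? ? ? /orP[]/eqP + /orP[]/eqP + /orP[]/eqP; repeat case: ifP; lia.
Qed.

Lemma cycle_rel_ordS_P3 n (i : 'I_n) : 2 < n ->
  [&& ordS (ordS i) != i, ordS (ordS i) != ordS i & cycle_rel (ordS i) (ordS (ordS i))].
Proof.
case: i => i lt_in n3; rewrite /cycle_rel -!val_eqE /= eqxx /=.
by rewrite ?succ_modn ?ltn_pmod; repeat case: ifP; lia.
Qed.

Lemma cycle_relE n (i j : 'I_n) : cycle_rel i j = (j == ordS i) || (i == ordS j).
Proof. by []. Qed.

Lemma cycle_rel_edges_in_P3 n : 2 < n -> edges_in_P3 (@cycle_rel n).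
Proof.
move=> n3 i j _; have P3 a := cycle_rel_ordS_P3 a n3.
rewrite cycle_relE => /orP[]/eqP ->; [move: (P3 i) | move: (P3 j)] => /and3P[ne_a ne_Sa adj].
- by exists (ordS (ordS i)); rewrite ne_a ne_Sa adj orbT.
- by exists (ordS (ordS j)); rewrite ne_a ne_Sa adj.
Qed.

Lemma banner_triangle_free : triangle_free banner_rel.
Proof.
by case=> [[|[|[|[|[|i]]]]] ?]; case=> [[|[|[|[|[|j]]]]] ?]; case=> [[|[|[|[|[|l]]]]] ?].
Qed.

Lemma banner_edges_in_P3 : edges_in_P3 banner_rel.
Proof.
case=> [[|[|[|[|[|i]]]]] ?]; case=> [[|[|[|[|[|j]]]]] ?] => // _ _;
  first [by exists (@Ordinal 5 0 isT) | by exists (@Ordinal 5 1 isT) | by exists (@Ordinal 5 3 isT)].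
Qed.

Lemma induced_adjacent_twins (U : finType) (r : rel U) n (F : rel 'I_n)
    (f : 'I_n -> U) i j :
  triangle_free F -> edges_in_P3 F ->
  injective f -> (forall i j, i != j -> r (f i) (f j) = F i j) ->
  r (f i) (f j) -> (forall w, w != f i -> w != f j -> r (f i) w = r (f j) w) ->
  i = j.
Proof.
move=> F3 FP3 finj fF rij twins; apply/eqP; apply/negPn/negP => ij.
have Fij : F i j by rewrite -fF.
have [l /and3P [li lj Fl]] := FP3 i j ij Fij.
have il : i != l by rewrite eq_sym.
have jl : j != l by rewrite eq_sym.
have Fil_jl : F i l = F j l.
  by rewrite -!fF // twins // (inj_eq finj).
by apply: (F3 i j l ij jl il Fij); move: Fl; rewrite Fil_jl orbb.
Qed.

Section Substitution.

Variables (T : finType) (e : rel T) (H : {set T}).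
Hypothesis e_sym : symmetric e.
Hypothesis e_irr : irreflexive e.
Hypothesis H_homog :
  forall v, v \notin H -> (forall h, h \in H -> e v h) \/ (forall h, h \in H -> ~~ e v h).

Lemma has_nbr_homogE x h : x \notin H -> h \in H -> [exists h' in H, e x h'] = e x h.
Proof.
move=> xH hH; apply/existsP/idP => [[h' /andP [h'H exh']]|exh]; last by exists h; rewrite hH.
by case: (H_homog xH) => [->|/(_ h' h'H)] //; rewrite exh'.
Qed.

Let k := chi (induced_on e H).

Lemma chi_induced_le_image m (c : T -> 'I_m) h0 :
  h0 \in H -> (forall x y, e x y -> c x != c y) -> k <= #|c @: H|.
Proof.
move=> h0H c_proper; have ch0 : c h0 \in c @: H by apply: imset_f.
apply: chi_min; first exact: induced_on_irr.
apply/colorableP; exists (fun x => enum_rank_in ch0 (c (val x))) => x y exy.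
apply: contra_neq (c_proper _ _ exy) => /(congr1 enum_val).
by rewrite !enum_rankK_in ?imset_f ?(valP x) ?(valP y).
Qed.

Lemma colorable_gGHK_chi h0 : h0 \in H -> colorable (gGHK e H k) (chi e).
Proof.
move=> h0H; have /colorableP [c c_proper] := chi_colorable e_irr.
have kS := chi_induced_le_image h0H c_proper.
pose d i := enum_val (widen_ord kS i) : 'I_(chi e).
have d_inj : injective d by move=> i j /enum_val_inj [] /val_inj.
have dH i : exists2 h, h \in H & d i = c h by apply/imsetP; apply: enum_valP.
apply/colorableP.
exists (fun u => match u with inl x => c (val x) | inr i => d i end) => -[x|i] [y|j] /=.
- exact: c_proper.
- by have [h hH ->] := dH j; rewrite (has_nbr_homogE (valP x) hH); apply: c_proper.
- by have [h hH ->] := dH i; rewrite (has_nbr_homogE (valP y) hH) eq_sym; apply: c_proper.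
- by apply: contra_neq => /d_inj.
Qed.

Lemma colorable_chi_gGHK h0 : h0 \in H -> colorable e (chi (gGHK e H k)).
Proof.
move=> h0H; have /colorableP [c c_proper] := chi_colorable (gGHK_irr (H:=H) (k:=k) e_irr).
have /colorableP [b b_proper] := chi_colorable (induced_on_irr (A:=H) e_irr).
pose hH0 : {x | x \in H} := exist _ h0 h0H.
apply/colorableP.
exists (fun x => if insub x is Some y then c (inl y) else c (inr (b (insubd hH0 x)))).
move=> x y; case: (insubP _ x) => [x' _ <-|xH]; case: (insubP _ y) => [y' _ <-|yH] exy;
  apply: c_proper => //=.
- by rewrite (has_nbr_homogE (valP x') (negPn yH)).
- by rewrite (has_nbr_homogE (valP y') (negPn xH)) e_sym.
- by apply: b_proper; rewrite /induced_on !insubdK ?(negPn xH) ?(negPn yH).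
Qed.

Lemma chi_gGHK h0 : h0 \in H -> chi e = chi (gGHK e H k).
Proof.
move=> h0H; apply/eqP; rewrite eqn_leq.
rewrite chi_min ?(colorable_chi_gGHK h0H) //= chi_min ?(colorable_gGHK_chi h0H) //.
exact: gGHK_irr.
Qed.

Lemma gGHK_clique_twins k' (a b : 'I_k') w :
  w != inr a -> w != inr b -> gGHK e H k' (inr a) w = gGHK e H k' (inr b) w.
Proof. by case: w => [x|c] //= ca cb; rewrite [a == c]eq_sym [b == c]eq_sym ca cb. Qed.

Lemma has_induced_gGHK k' n (F : rel 'I_n) h0 :
  h0 \in H -> triangle_free F -> edges_in_P3 F ->
  has_induced (gGHK e H k') F -> has_induced e F.
Proof.
move=> h0H F3 FP3 [f [f_inj fF]].
have clique_once i j a b : f i = inr a -> f j = inr b -> i = j.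
  move=> fi fj; have [eq_ab|ab] := eqVneq a b; first by apply: f_inj; rewrite fi fj eq_ab.
  apply: (induced_adjacent_twins F3 FP3 f_inj fF); rewrite fi fj //=.
  by move=> w; apply: gGHK_clique_twins.
exists (fun i => if f i is inl x then val x else h0); split.
- move=> i j; case fi: (f i) => [x|a]; case fj: (f j) => [y|b].
  + by move/val_inj => xy; apply: f_inj; rewrite fi fj xy.
  + by move=> xh0; move: (valP x); rewrite /= xh0 h0H.
  + by move=> h0y; move: (valP y); rewrite /= -h0y h0H.
  + by move=> _; apply: clique_once fi fj.
- move=> i j ij; rewrite -(fF i j ij); case fi: (f i) => [x|a]; case fj: (f j) => [y|b] //=.
  + by rewrite (has_nbr_homogE (valP x) h0H).
  + by rewrite e_sym (has_nbr_homogE (valP y) h0H).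
  + by move: ij; rewrite (clique_once i j a b fi fj) eqxx.
Qed.

End Substitution.

Theorem mainTheorem6 (T : finType) (e : rel T)
  (e_sym : symmetric e) (e_irr : irreflexive e) (H : {set T})
  (hH : homogeneous e H) :
  let k := chi (induced_on e H) in
  chi e = chi (gGHK e H k) /\
  (~ has_banner e -> ~ has_odd_hole e ->
     ~ has_banner (gGHK e H k) /\ ~ has_odd_hole (gGHK e H k)).
Proof.
rewrite /=; case: hH => [H2 [_ H_homog]].
have [h0 h0H] : exists h0, h0 \in H.
  by apply/set0Pn; rewrite -card_gt0; apply: leq_trans H2.
split; first exact: (chi_gGHK e_sym e_irr H_homog h0H).
move=> no_banner no_odd_hole; split.
  move/(has_induced_gGHK e_sym H_homog h0H banner_triangle_free banner_edges_in_P3).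
  exact: no_banner.
move=> [n [n4 [n_odd hole]]]; apply: no_odd_hole; exists n; do 2!split=> //.
exact: (has_induced_gGHK e_sym H_homog h0H (cycle_rel_triangle_free n4)
  (cycle_rel_edges_in_P3 (ltnW n4)) hole).
Qed.
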